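(* For every $p\in(0,1]$ there exists $\alpha>0$ such that for every integer $n\ge1$: if an online algorithm for the $\mathrm{AND}$ instance with $n$ variables reveals at least one of the variables with probability at least $p$, then its expected cost is at least $\alpha\cdot n$.
   Context: The $\mathrm{AND}$ instance with $n$ variables: $f(x)=\bigwedge_{i=1}^n x_i$, input $x$ uniform on $\{0,1\}^n$, costs $(c_1,\dots,c_n)$ a uniformly random permutation of $\{1,\dots,n\}$. Online priced query model: the algorithm (possibly randomized) knows $f$ but not $x$ or $c$; it maintains investments $\theta$ (initially $0$), increasing one coordinate by a positive amount per step; $x_i$ is revealed once $\theta_i\ge c_i$; cost is $\|\theta\|_1$ at halting. Probabilities and expectations are over input, costs, and the algorithm's randomness. *)

From HB Require Import structures.
From mathcomp Require Import all_boot all_order all_algebra all_fingroup.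
From mathcomp Require Import all_classical all_reals all_analysis measurable_realfun.
Set Implicit Arguments. Unset Strict Implicit. Unset Printing Implicit Defensive.
Import Order.TTheory GRing.Theory Num.Theory.
Local Open Scope classical_set_scope.
Local Open Scope ring_scope.

(* Input x : {ffun 'I_n -> bool};  costs: a permutation c of 'I_n, the
   cost of variable i being (c i).+1  (so the costs form a permutation of
   {1,...,n}).

   A deterministic online algorithm sees, after each step, an observation
   [option bool]: [Some b] iff the coordinate just invested in is revealed
   (theta_i >= c_i), with value b = x_i; [None] otherwise.  Based on the
   history of observations it either halts ([None]) or invests a positive
   amount d in coordinate i ([Some (i, d)]). *)
Definition alg (R : realType) (n : nat) := seq (option bool) -> option ('I_n * R).

Definition valid_alg (R : realType) (n : nat) (A : alg R n) : Prop :=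
  forall h i d, A h = Some (i, d) -> 0 < d.

Definition costval {R : realType} {n : nat} (c : {perm 'I_n}) (i : 'I_n) : R :=
  (c i).+1%:R.

(* state after k steps: (history, investments theta, halted flag) *)
Fixpoint run (R : realType) (n : nat) (A : alg R n) (x : {ffun 'I_n -> bool})
  (c : {perm 'I_n}) (k : nat) : seq (option bool) * ('I_n -> R) * bool :=
  match k with
  | 0 => ([::], (fun _ => 0), false)
  | k'.+1 =>
    let '(h, th, hl) := run A x c k' in
    if hl then (h, th, hl) else
    match A h with
    | None => (h, th, true)
    | Some (i, d) =>
      let th' := fun j => if j == i then th j + d else th j in
      (rcons h (if costval c i <= th' i then Some (x i) else None), th', false)
    end
  end.

Definition theta (R : realType) (n : nat) (A : alg R n) x c k : 'I_n -> R :=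
  (run A x c k).1.2.

Definition reveals (R : realType) (n : nat) (A : alg R n) x c : Prop :=
  exists k i, costval c i <= theta A x c k i.

(* cost = ||theta||_1 at halting; written as the supremum over time of
   ||theta_k||_1 (theta is nondecreasing and frozen after halting, so this is
   exactly the cost at halting; for a non-halting run it is the limit). *)
Definition run_cost (R : realType) (n : nat) (A : alg R n) x c : \bar R :=
  ereal_sup (range (fun k => (\sum_i theta A x c k i)%:E)).

Local Open Scope ereal_scope.

(* randomized algorithm: A : Omega -> alg R n, with random seed w ~ P,
   independent of the uniform input x and uniform cost permutation c. *)
Definition prob_reveal (R : realType) (n : nat) (d : measure_display)
  (Omega : measurableType d) (P : probability Omega R) (A : Omega -> alg R n)
  : \bar R :=
  (\sum_(x : {ffun 'I_n -> bool}) \sum_(c : {perm 'I_n})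
     P [set w | reveals (A w) x c])
  * ((#|{ffun 'I_n -> bool}| * #|{perm 'I_n}|)%:R^-1)%:E.

Definition exp_cost (R : realType) (n : nat) (d : measure_display)
  (Omega : measurableType d) (P : probability Omega R) (A : Omega -> alg R n)
  : \bar R :=
  (\sum_(x : {ffun 'I_n -> bool}) \sum_(c : {perm 'I_n})
     \int[P]_w run_cost (A w) x c)
  * ((#|{ffun 'I_n -> bool}| * #|{perm 'I_n}|)%:R^-1)%:E.

From HB Require Import structures.
From mathcomp Require Import all_boot all_order all_algebra all_fingroup.
From mathcomp Require Import all_classical all_reals all_analysis measurable_realfun.
From mathcomp Require Import ring.
Import Order.TTheory GRing.Theory Num.Theory.
Local Open Scope classical_set_scope.
Local Open Scope ring_scope.

(* Until a variable is revealed every observation is [None], so a deterministic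
   algorithm follows one fixed investment schedule [blind_theta], independent of
   the input and of the costs.  An investment vector t reaches the cost of some
   variable for at most a fraction (sum_i t_i)/n of the cost permutations: variable
   i has cost at most t_i for at most t_i (n-1)! of them.  Taking t to be the blind
   schedule at the last time needed, the permutations revealed at cost at most s
   form a fraction at most s/n.  Since s 1[reveal] <= cost + s 1[reveal, cost <= s],
   averaging gives s p <= E[cost] + s^2/n, and s = p n / 2 yields E[cost] >= p^2 n / 4. *)

Definition reaches {R : realType} {n : nat} (t : 'I_n -> R) (c : {perm 'I_n}) : bool :=
  [exists i, costval c i <= t i].

Section PermCount.
Context {n : nat}.

Lemma sum_perm_app (V : nmodType) (g : 'I_n -> V) (i : 'I_n) :
  (\sum_(c : {perm 'I_n}) g (c i)) *+ n = (\sum_j g j) *+ n`!.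
Proof.
have app_indep i' : \sum_(c : {perm 'I_n}) g (c i') = \sum_(c : {perm 'I_n}) g (c i).
  rewrite (reindex_inj (mulgI (tperm i i'))) /=.
  by apply: eq_bigr => c _; rewrite permM tpermR.
have -> : (\sum_(c : {perm 'I_n}) g (c i)) *+ n = \sum_i' \sum_(c : {perm 'I_n}) g (c i').
  by rewrite (eq_bigr _ (fun i' _ => app_indep i')) sumr_const card_ord.
rewrite exchange_big /= -card_Sn -sumr_const.
apply: eq_big => [c|c _]; first by rewrite inE.
by rewrite [RHS](reindex_inj (@perm_inj _ c)).
Qed.

Lemma card_cost_le (R : realFieldType) (t : R) : 0 <= t ->
  #|[pred j : 'I_n | j.+1%:R <= t]|%:R <= t.
Proof.
move=> t_ge0; rewrite -sumr_const big_mkcond /=.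
rewrite -(big_mkord xpredT (fun j => if j.+1%:R <= t then 1 else 0)).
elim: n => [|m IHm]; first by rewrite big_geq.
rewrite big_nat_recr //=; case: ifP => [m1_le_t|_]; last by rewrite addr0.
apply: le_trans m1_le_t; rewrite -natr1 lerD2r -[m in m%:R]subn0 -sumr_const_nat.
by apply: ler_sum => j _; case: ifP.
Qed.

Lemma card_reaches_le {R : realType} (t : 'I_n -> R) : (forall i, 0 <= t i) ->
  #|[pred c | reaches t c]|%:R * n%:R <= n`!%:R * \sum_i t i.
Proof.
move=> t_ge0.
pose hit i c : R := if costval c i <= t i then 1 else 0.
have union_bound : #|[pred c | reaches t c]|%:R <= \sum_i \sum_c hit i c.
  rewrite -sumr_const exchange_big big_mkcond /=; apply: ler_sum => c _.
  rewrite inE /hit /reaches; case: existsP => [[i ci_le]|_].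
    by rewrite (bigD1 i) //= ci_le lerDl; apply: sumr_ge0 => j _; case: ifP.
  by apply: sumr_ge0 => i _; case: ifP.
apply: le_trans (ler_wpM2r (ler0n _ _) union_bound) _.
rewrite mulr_suml mulr_sumr; apply: ler_sum => i _.
rewrite mulr_natr (@sum_perm_app _ (fun j : 'I_n => if j.+1%:R <= t i then 1 else 0)).
rewrite -[X in X <= _]mulr_natl -big_mkcond sumr_const; apply: ler_wpM2l => //.
exact: card_cost_le.
Qed.

End PermCount.

Lemma exists_common_time (T : finType) (B : pred T) (P : nat -> Prop)
    (Q : nat -> T -> Prop) :
  (forall k k' t, (k <= k')%N -> Q k t -> Q k' t) -> P 0%N ->
  (forall t, B t -> exists2 k, P k & Q k t) ->
  exists2 K, P K & forall t, B t -> Q K t.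
Proof.
move=> Q_mono P0 BPQ.
suff [K PK QK] : exists2 K, P K & forall t, t \in enum B -> Q K t.
  by exists K => // t Bt; apply: QK; rewrite mem_enum.
have : forall t, t \in enum B -> B t by move=> t; rewrite mem_enum.
elim: (enum B) => [|t ts IHts] tsB; first by exists 0%N.
have /IHts[K PK QK] : forall t', t' \in ts -> B t'.
  by move=> t' t'ts; apply: tsB; rewrite inE t'ts orbT.
have [k Pk Qk] := BPQ t (tsB t (mem_head _ _)).
exists (maxn k K); first by case: leqP.
move=> t'; rewrite inE => /predU1P[->|t'ts].
  exact: Q_mono (leq_maxl _ _) Qk.
exact: Q_mono (leq_maxr _ _) (QK _ t'ts).
Qed.

Section BlindRun.
Context {R : realType} {n : nat} (A : alg R n).

Fixpoint blind_run (k : nat) : seq (option bool) * ('I_n -> R) * bool :=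
  match k with
  | 0 => ([::], (fun _ => 0), false)
  | k'.+1 =>
    let '(h, th, hl) := blind_run k' in
    if hl then (h, th, hl) else
    match A h with
    | None => (h, th, true)
    | Some (i, d) => (rcons h None, (fun j => if j == i then th j + d else th j), false)
    end
  end.

Definition blind_theta (k : nat) : 'I_n -> R := (blind_run k).1.2.

Lemma run_eq_blind x c k :
  (forall j, (j <= k)%N -> ~~ reaches (theta A x c j) c) -> run A x c k = blind_run k.
Proof.
elim: k => [//|k IHk] unreached.
have run_k : run A x c k = blind_run k by apply: IHk => j /leqW; exact: unreached.
move: (unreached k.+1 (leqnn _)); rewrite /theta /= run_k.
case: (blind_run k) => [[h th] [|]] //=; case: (A h) => [[i d]|] //=.
by move=> /existsPn /(_ i); rewrite eqxx => /negbTE ->.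
Qed.

Lemma theta_succ_eq_blind x c k :
  run A x c k = blind_run k -> theta A x c k.+1 = blind_theta k.+1.
Proof.
rewrite /theta /blind_theta /= => ->.
by case: (blind_run k) => [[h th] [|]] //=; case: (A h) => [[i d]|].
Qed.

Lemma reveals_blind x c : reveals A x c ->
  exists2 k, reaches (blind_theta k) c & ((\sum_i blind_theta k i)%:E <= run_cost A x c)%E.
Proof.
case=> k0 [i0 revealed].
have [k reached_k first_k] := ex_minnP (ex_intro (fun k => reaches (theta A x c k) c) k0
  (introT existsP (ex_intro _ i0 revealed))).
case: k reached_k first_k => [|k] reached_k first_k.
  by move: reached_k => /existsP[i]; rewrite /theta /= /costval lern0.
have theta_k1 : theta A x c k.+1 = blind_theta k.+1.
  apply/theta_succ_eq_blind/run_eq_blind => j j_le_k; apply/negP => /first_k.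
  by rewrite ltnNge j_le_k.
exists k.+1; rewrite -theta_k1 //.
by apply: ereal_sup_ubound; exists k.+1.
Qed.

Hypothesis A_valid : valid_alg A.

Lemma blind_theta_le_succ k i : blind_theta k i <= blind_theta k.+1 i.
Proof.
rewrite /blind_theta /=; case: (blind_run k) => [[h th] [|]] //=.
case A_h: (A h) => [[j d]|] //=; case: eqP => // _.
by rewrite lerDl ltW // (A_valid _ _ _ A_h).
Qed.

Lemma blind_theta_ge0 k i : 0 <= blind_theta k i.
Proof. by elim: k => [//|k IHk]; apply: le_trans IHk (blind_theta_le_succ k i). Qed.

Lemma blind_theta_mono i : {homo blind_theta^~ i : k k' / (k <= k')%N >-> k <= k'}.
Proof. exact: homo_leq (@lexx _ _) (@le_trans _ _) (blind_theta_le_succ^~ i). Qed.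

Lemma run_cost_ge0 x c : (0 <= run_cost A x c)%E.
Proof. by apply: ereal_sup_ubound; exists 0%N; rewrite // /theta big1. Qed.

Lemma card_cheap_reveals_le x (s : R) : 0 <= s ->
  #|[pred c | `[< reveals A x c /\ (run_cost A x c <= s%:E)%E >]]|%:R * n%:R
    <= n`!%:R * s.
Proof.
move=> s_ge0.
have [K sum_K reached_K] : exists2 K, \sum_i blind_theta K i <= s &
    forall c, `[< reveals A x c /\ (run_cost A x c <= s%:E)%E >] -> reaches (blind_theta K) c.
  apply: exists_common_time => [k k' c k_le /existsP[i reached_i]| |c].
  - by apply/existsP; exists i; apply: le_trans reached_i (blind_theta_mono i _ _ k_le).
  - by rewrite /blind_theta big1.
  move=> /asboolP[/reveals_blind[k reached_k cost_k] cheap]; exists k => //.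
  by rewrite -lee_fin (le_trans cost_k cheap).
apply: le_trans _ (ler_wpM2l (ler0n _ _) sum_K).
apply: le_trans _ (card_reaches_le _ (blind_theta_ge0 K)).
rewrite ler_wpM2r // ler_nat; apply: subset_leq_card; apply/fintype.subsetP => c.
by rewrite !inE => cheap; apply/reached_K/asboolP.
Qed.

Lemma reveal_le_cost_cheap x c (s : R) : 0 <= s ->
  ((s * `[< reveals A x c >]%:R)%:E
    <= run_cost A x c + (s * `[< reveals A x c /\ (run_cost A x c <= s%:E)%E >]%:R)%:E)%E.
Proof.
move=> s_ge0; have cost_ge0 := run_cost_ge0 x c.
have [revealed|] := pselect (reveals A x c); last first.
  by move=> /asboolPn/negbTE ->; rewrite mulr0 adde_ge0 // lee_fin mulr_ge0.
rewrite (asboolT revealed) mulr1.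
have [cheap|costly] := pselect (run_cost A x c <= s%:E)%E.
  by rewrite asboolT // mulr1 leeDr.
rewrite asboolF; last by case.
by rewrite mulr0 adde0 ltW // ltNge; apply/negP.
Qed.

Lemma sum_reveal_le x (s : R) : 0 <= s -> (0 < n)%N ->
  (\sum_c (s * `[< reveals A x c >]%:R)%:E
    <= \sum_c run_cost A x c + (n`!%:R * (s ^+ 2 / n%:R))%:E)%E.
Proof.
move=> s_ge0 n_gt0.
apply: le_trans; first by apply: lee_sum => c _; exact: reveal_le_cost_cheap.
rewrite big_split /= leeD2l // sumEFin lee_fin -mulr_sumr.
have n_pos : 0 < n%:R :> R by rewrite ltr0n.
have -> : \sum_c `[< reveals A x c /\ (run_cost A x c <= s%:E)%E >]%:R
    = #|[pred c | `[< reveals A x c /\ (run_cost A x c <= s%:E)%E >]]|%:R :> R.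
  by rewrite -sumr_const [RHS]big_mkcond; apply: eq_bigr => c _; rewrite inE; case: asboolP.
rewrite -(ler_pM2r n_pos) -mulrA -[X in _ <= X]mulrA divfK ?gt_eqF //.
by rewrite expr2 [X in _ <= X]mulrCA; apply: ler_wpM2l => //; exact: card_cheap_reveals_le.
Qed.

End BlindRun.

Section Randomized.
Local Open Scope ereal_scope.
Context {R : realType} {n : nat} {d : measure_display} {Omega : measurableType d}.
Context (P : probability Omega R) {A : Omega -> alg R n}.
Hypothesis A_valid : forall w, valid_alg (A w).
Hypothesis reveals_measurable : forall x c, measurable [set w | reveals (A w) x c].
Hypothesis run_cost_measurable :
  forall x c, measurable_fun [set: Omega] (fun w => run_cost (A w) x c).

Lemma sum_prob_reveal_le x (s : R) : (0 <= s)%R -> (0 < n)%N ->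
  s%:E * (\sum_c P [set w | reveals (A w) x c])
    <= \sum_c \int[P]_w run_cost (A w) x c + (n`!%:R * (s ^+ 2 / n%:R))%:E.
Proof.
move=> s_ge0 n_gt0.
pose revealed c w := (s * `[< reveals (A w) x c >]%:R)%:E.
have revealed_ge0 c w : 0 <= revealed c w by rewrite lee_fin mulr_ge0.
have revealed_measurable c : measurable_fun [set: Omega] (revealed c).
  apply/measurable_EFinP/measurable_funM => //; exact: (measurable_indic (reveals_measurable x c)).
have prob_integral c : s%:E * P [set w | reveals (A w) x c] = \int[P]_w revealed c w.
  have := integral_indic P measurableT (reveals_measurable x c); rewrite setIT => <-.
  by rewrite -ge0_integralZl //; apply/measurable_EFinP; exact: measurable_indic.
have cost_ge0 w : 0 <= \sum_c run_cost (A w) x c.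
  by apply: sume_ge0 => c _; exact: run_cost_ge0.
have const_ge0 : 0 <= (n`!%:R * (s ^+ 2 / n%:R))%:E.
  by rewrite lee_fin mulr_ge0 // divr_ge0 // sqr_ge0.
rewrite ge0_sume_distrr; last by move=> c _; exact: measure_ge0.
rewrite (eq_bigr _ (fun c _ => prob_integral c)) -ge0_integral_sum //.
rewrite -ge0_integral_sum //; last by move=> c w _; exact: run_cost_ge0.
rewrite -[X in _ <= _ + X]mule1 -(probability_setT P) -integral_cst //.
rewrite -ge0_integralD //; last exact: emeasurable_sum.
apply: ge0_le_integral => //.
- by move=> w _; apply: sume_ge0 => c _.
- exact: emeasurable_sum.
- by apply: emeasurable_funD => //; exact: emeasurable_sum.
by move=> w _; exact: sum_reveal_le.
Qed.

Lemma prob_reveal_le_exp_cost (s : R) : (0 <= s)%R -> (0 < n)%N ->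
  s%:E * prob_reveal P A <= exp_cost P A + (s ^+ 2 / n%:R)%:E.
Proof.
move=> s_ge0 n_gt0; rewrite /prob_reveal /exp_cost.
set X := #|{ffun 'I_n -> bool}|; set k := ((X * #|{perm 'I_n}|)%:R^-1)%R.
set const := (n`!%:R * (s ^+ 2 / n%:R))%R.
have sum_le : s%:E * (\sum_x \sum_c P [set w | reveals (A w) x c])
    <= \sum_x \sum_c \int[P]_w run_cost (A w) x c + (X%:R * const)%:E.
  rewrite ge0_sume_distrr; last by move=> x _; apply: sume_ge0 => c _.
  apply: le_trans; first by apply: lee_sum => x _; exact: sum_prob_reveal_le.
  by rewrite big_split /= sumEFin sumr_const [(X%:R * _)%R]mulr_natl.
have k_ge0 : 0 <= k%:E by rewrite lee_fin invr_ge0.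
rewrite muleA; apply: le_trans (lee_wpmul2r k_ge0 sum_le) _.
rewrite muleDl ?fin_num_adde_defl // -EFinM leeD2l // lee_fin.
have X_fact_neq0 : ((X * n`!)%:R != 0 :> R)%R.
  by rewrite pnatr_eq0 muln_eq0 negb_or /X card_ffun expn_eq0 card_bool -lt0n fact_gt0.
by rewrite /k /const card_Sn mulrA natrM mulrAC -natrM mulfV ?mul1r.
Qed.

End Randomized.

Theorem mainTheorem15 (R : realType) (p : R) :
  0 < p <= 1 ->
  exists alpha : R, 0 < alpha /\
    forall n : nat, (1 <= n)%N ->
    forall (d : measure_display) (Omega : measurableType d)
           (P : probability Omega R) (A : Omega -> alg R n),
      (forall w, valid_alg (A w)) ->
      (forall x c, measurable [set w | reveals (A w) x c]) ->
      (forall x c, measurable_fun [set: Omega] (fun w => run_cost (A w) x c : \bar R)) ->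
      (p%:E <= prob_reveal P A)%E ->
      ((alpha * n%:R)%:E <= exp_cost P A)%E.
Proof.
move=> /andP[p_gt0 _]; exists (p ^+ 2 / 4); split; first by rewrite divr_gt0 ?exprn_gt0.
move=> n n_gt0 d Omega P A A_valid reveals_measurable run_cost_measurable p_le.
pose s := p * n%:R / 2.
have s_ge0 : 0 <= s by rewrite divr_ge0 // mulr_ge0 // ltW.
have := le_trans (lee_wpmul2l (s_ge0 : (0 <= s%:E)%E) p_le)
  (prob_reveal_le_exp_cost P A_valid reveals_measurable run_cost_measurable s s_ge0 n_gt0).
rewrite -EFinM; case: (exp_cost P A) => [cost | _ | ]; last 2 first.
- by rewrite leey.
- by rewrite addNye leeNy_eq.
rewrite -EFinD !lee_fin -lerBlDr => sp_le.
have -> : p ^+ 2 / 4 * n%:R = s * p - s ^+ 2 / n%:R.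
  by rewrite /s; field; rewrite pnatr_eq0 -lt0n.
exact: sp_le.
Qed.
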